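(* Let $q$ be a prime power, $n\ge 1$, and $k\ge1$ an integer with $q>2k+1$. Then \[\dim(\operatorname{Hull}(C_{n,k}^q))=\dim(C_{n,k}^q)-1=\binom{n+k}{k}-1.\] Moreover, $\{\operatorname{ev}(m)\}_{m\in\mathcal{M}}$ is a basis of $\operatorname{Hull}(C_{n,k}^q)$, where $\mathcal{M}$ is the set of all monomials of degree $k$ in $x_0,\dots,x_n$ other than $x_n^k$.
   Context: For a prime power $q$ and integers $n\ge 1$, $k\ge 0$, the projective Reed-Muller code $C_{n,k}^q\subseteq \mathbb{F}_q^N$, $N=\frac{q^{n+1}-1}{q-1}$, is defined as follows. For each point of $\mathbb{P}^n(\mathbb{F}_q)$ choose the affine representative $(p_0,\dots,p_n)\in\mathbb{F}_q^{n+1}\setminus\{0\}$ whose left-most nonzero coordinate equals $1$, and fix an ordering $P_1',\dots,P_N'$ of these representatives; for a polynomial $F$ write $\operatorname{ev}(F)=(F(P_1'),\dots,F(P_N'))$. Then $C_{n,k}^q=\{\operatorname{ev}(F) : F\in \mathbb{F}_q[x_0,\dots,x_n]_k\}$, where $\mathbb{F}_q[x_0,\dots,x_n]_k$ is the space of homogeneous polynomials of degree $k$ together with $0$. Duals are with respect to the standard dot product, and $\operatorname{Hull}(C)=C\cap C^\perp$. *)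

From HB Require Import structures.
From mathcomp Require Import all_boot all_order all_algebra.
From mathcomp Require Import all_field.
From mathcomp Require Import mpoly.
Set Implicit Arguments.
Unset Strict Implicit.
Unset Printing Implicit Defensive.
Import Order.TTheory GRing.Theory.
Local Open Scope ring_scope.

Section ProjRM.
Variables (F : finFieldType) (n : nat).

(* affine representative of a projective point: left-most nonzero coordinate is 1 *)
Definition normalized (v : 'rV[F]_(n.+1)) : bool :=
  [exists i : 'I_(n.+1), (v 0 i == 1) &&
     [forall j : 'I_(n.+1), (j < i)%N ==> (v 0 j == 0)]].

Definition proj_pts : {set 'rV[F]_(n.+1)} := [set v | normalized v].

Definition Npts : nat := #|proj_pts|.

Definition pt (i : 'I_Npts) : 'rV[F]_(n.+1) := @enum_val _ (mem proj_pts) i.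

Definition ev (p : {mpoly F[n.+1]}) : 'rV[F]_Npts :=
  \row_(i < Npts) p.@[fun j => pt i 0 j].

Definition dotv (u v : 'rV[F]_Npts) : F := \sum_(i < Npts) u 0 i * v 0 i.

Definition xn_pow (k : nat) : 'X_{1..n.+1} :=
  [multinom (if i == ord_max then k else 0%N) | i < n.+1].

Definition Mmon (k : nat) : seq 'X_{1..n.+1} :=
  [seq val m | m : 'X_{1..n.+1 < k.+1} in
     [pred m : 'X_{1..n.+1 < k.+1} | (mdeg (val m) == k) && (val m != xn_pow k)]].

End ProjRM.

(* Pairing evaluation vectors of monomials reduces to sums over the normalized
   points of P^n(F_q). Grouping the points by the position of their leading 1
   turns such a sum into products of power sums [\sum_x x ^+ e], which vanish
   for [e < q - 1] and equal [-1] for [e = q - 1]. When [deg a + deg b < q - 1]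
   only the point [(0 : ... : 0 : 1)] survives, so [ev x^a . ev x^b] is [1] if
   [a = b = x_n^k] and [0] otherwise: the monomials of degree [k] other than
   [x_n^k] are orthogonal to the whole code, while [ev x_n^k] is not. Pairing
   against the dual monomials [x_0 * \prod_(j > 0) x_j ^+ (q - 1 - b j)] shows
   that the evaluated degree-[k] monomials are linearly independent, so the
   code has dimension ['C(n + k, k)] and its hull is the hyperplane spanned by
   the other monomials. *)

From HB Require Import structures.
From mathcomp Require Import all_boot all_order all_algebra all_field.
From mathcomp Require Import fingroup cyclic mpoly zify.
Set Implicit Arguments.
Unset Strict Implicit.
Unset Printing Implicit Defensive.
Import Order.TTheory GRing.Theory.
Local Open Scope ring_scope.

Section PowerSums.
Variable F : finFieldType.

Lemma natr_card_finField : (#|F|%:R : F) = 0.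
Proof.
have := @expg_cardG (F : finZmodType) [set: F]%G (GRing.one F) (in_setT _).
by rewrite FinRing.zmodXgE cardsT.
Qed.

Lemma card_finField_pred_gt0 : (0 < #|F|.-1)%N.
Proof. by have := finNzRing_gt1 F; case: #|F| => [|[|q]]. Qed.

(* For [e = 0] the sum is [#|F| * 1 = 0] (as [0 ^+ 0 = 1]); otherwise it is
   invariant under multiplication by any [a] with [a ^+ e != 1], and such an
   [a] exists since ['X^e - 1] has fewer than [#|F| - 1] roots. *)
Lemma sum_expr_eq0 (e : nat) : (e < #|F|.-1)%N -> \sum_(x : F) x ^+ e = 0.
Proof.
case: e => [|e] lt_e_q.
  under eq_bigr do rewrite expr0.
  by rewrite sumr_const natr_card_finField.
have [a a_neq0 ae_neq1] : exists2 a : F, a != 0 & a ^+ e.+1 != 1.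
  case: (pickP (fun a : F => (a != 0) && (a ^+ e.+1 != 1))) => [a /andP[]|all1].
    by exists a.
  suff: false by [].
  have := @max_poly_roots F ('X^(e.+1) - 1%:P) (enum (predC1 0)).
  rewrite size_XnsubC // -cardE cardC1 ltnS leqNgt lt_e_q; apply.
  - by rewrite -size_poly_eq0 size_XnsubC.
  - apply/allP => x; rewrite mem_enum inE => x_neq0.
    move/negbT: (all1 x); rewrite /= x_neq0 negbK => /eqP xe.
    by rewrite rootE !hornerE xe subrr.
  - exact: enum_uniq.
set S := \sum_(x : F) _.
have aS : S = a ^+ e.+1 * S.
  rewrite mulr_sumr [LHS](reindex_inj (mulfI a_neq0)).
  by apply: eq_bigr => x _; rewrite exprMn.
have /eqP := aS; rewrite -subr_eq0 -{1}[S]mul1r -mulrBl mulf_eq0 subr_eq0.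
by rewrite eq_sym (negbTE ae_neq1) => /eqP.
Qed.

Lemma sum_expr_card_pred : \sum_(x : F) x ^+ #|F|.-1 = -1.
Proof.
have q_gt0 := card_finField_pred_gt0.
rewrite (bigD1 0) //= expr0n eqn0Ngt q_gt0 add0r.
rewrite (eq_bigr (fun _ => 1)) => [|x x_neq0]; last first.
  apply: (mulfI x_neq0); rewrite -exprS prednK; last exact: ltnW (finNzRing_gt1 F).
  by rewrite expf_card mulr1.
rewrite sumr_const cardC1 -[_ *+ _]addr0 -(subrr 1) addrA -mulrSr.
by rewrite prednK ?natr_card_finField ?add0r // ltnW // finNzRing_gt1.
Qed.

Lemma expr_card_predD (x : F) (d : nat) : (0 < d)%N -> x ^+ (#|F|.-1 + d) = x ^+ d.
Proof.
case: d => // d _; rewrite addnS -addSn prednK; last exact: ltnW (finNzRing_gt1 F).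
by rewrite exprD expf_card exprS.
Qed.

End PowerSums.

Section ProjectiveSums.
Variables (F : finFieldType) (n : nat).
Implicit Types (m : 'X_{1..n.+1}) (v : 'rV[F]_n.+1) (i j : 'I_n.+1).

Lemma sum_row_prod (f : 'I_n.+1 -> F -> F) :
  \sum_(v : 'rV[F]_n.+1) \prod_j f j (v 0 j) = \prod_j \sum_(x : F) f j x.
Proof.
rewrite bigA_distr_bigA (reindex (fun g : {ffun 'I_n.+1 -> F} => \row_j g j)) /=.
  by apply: eq_bigr => g _; apply: eq_bigr => j _; rewrite mxE.
exists (fun v : 'rV[F]_n.+1 => [ffun j => v 0 j]) => [g _|v _].
  by apply/ffunP => j; rewrite ffunE mxE.
by apply/rowP => j; rewrite mxE ffunE.
Qed.

Definition leading_one i v : bool :=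
  (v 0 i == 1) && [forall j : 'I_n.+1, (j < i)%N ==> (v 0 j == 0)].

Lemma normalizedE v : normalized v = [exists i, leading_one i v].
Proof. by []. Qed.

Lemma leading_one_inj v i i' : leading_one i v -> leading_one i' v -> i = i'.
Proof.
have lt_leading (a b : 'I_n.+1) : leading_one a v -> leading_one b v -> ~~ (a < b)%N.
  move=> /andP[/eqP va1 _] /andP[_ /forallP vb]; apply/negP => lt_ab.
  by move/implyP: (vb a) => /(_ lt_ab); rewrite va1 oner_eq0.
move=> vi vi'; apply/eqP; rewrite eq_le !leNgt.
by rewrite (lt_leading _ _ vi vi') (lt_leading _ _ vi' vi).
Qed.

Lemma ltn_ord_max j : (j < n)%N = (j != ord_max).
Proof. by rewrite ltn_neqAle -ltnS ltn_ord andbT. Qed.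

(* The sum of [x_j ^+ m j] over the points whose leading one is at [i]. *)
Definition leading_factor m i j : F :=
  if (j < i)%N then 0 ^+ m j else if j == i then 1 else \sum_(x : F) x ^+ m j.

Definition proj_sum m : F := \sum_(v in proj_pts F n) \prod_j v 0 j ^+ m j.

Lemma sum_leading_one m i :
  \sum_v (if leading_one i v then \prod_j v 0 j ^+ m j else 0) =
  \prod_j leading_factor m i j.
Proof.
(* [leading_one i v] is a product of conditions on the separate coordinates. *)
pose w j (x : F) : F :=
  if (j < i)%N then (x == 0)%:R else if j == i then (x == 1)%:R else 1.
have sum_w j : \sum_(x : F) w j x * x ^+ m j = leading_factor m i j.
  rewrite /w /leading_factor; case: ifP => _.
    rewrite (bigD1 0) //= eqxx mul1r big1 ?addr0 // => x /negbTE ->.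
    by rewrite mul0r.
  case: ifP => _; last by under eq_bigr do rewrite mul1r.
  rewrite (bigD1 1) //= eqxx mul1r expr1n big1 ?addr0 // => x /negbTE ->.
  by rewrite mul0r.
rewrite -(eq_bigr _ (fun j _ => sum_w j)) -sum_row_prod.
apply: eq_bigr => v _; rewrite /w; case: ifP => [/andP[/eqP vi1 /forallP vi]|].
  apply: eq_bigr => j _; case: ifP => [lt_ji|_].
    by move/implyP: (vi j) => /(_ lt_ji)/eqP ->; rewrite eqxx mul1r.
  by case: ifP => [/eqP ->|_]; rewrite ?vi1 ?eqxx mul1r.
rewrite /leading_one; case: (boolP (v 0 i == 1)) => /= [_|vi_neq1].
  move=> /negbT /forallPn [j]; rewrite negb_imply => /andP[lt_ji vj_neq0].
  by rewrite (bigD1 j) //= lt_ji (negbTE vj_neq0) !mul0r.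
by rewrite (bigD1 i) //= ltnn eqxx (negbTE vi_neq1) !mul0r.
Qed.

Lemma proj_sumE m : proj_sum m = \sum_i \prod_j leading_factor m i j.
Proof.
rewrite /proj_sum -(eq_bigr _ (fun i _ => sum_leading_one m i)) exchange_big /=.
rewrite big_mkcond; apply: eq_bigr => v _; rewrite inE normalizedE.
case: existsP => [[i vi]|no_lead]; last first.
  by rewrite big1 // => i _; case: ifP => // vi; case: no_lead; exists i.
have {}vi : leading_one i v := vi.
rewrite [RHS](bigD1 i) //= vi [X in _ + X]big1 ?addr0 // => i' neq_i'i.
by case: ifP => // vi'; rewrite (leading_one_inj vi vi') eqxx in neq_i'i.
Qed.

(* Only the point [(0 : ... : 0 : 1)] survives: for any other position of the
   leading one, the free last coordinate contributes a vanishing power sum. *)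
Lemma proj_sum_small m : (forall j, m j < #|F|.-1)%N ->
  proj_sum m = if [forall j, (j != ord_max) ==> (m j == 0%N)] then 1 else 0.
Proof.
move=> small_m; rewrite proj_sumE big_ord_recr /= big1 ?add0r => [|i _]; last first.
  rewrite (bigD1 ord_max) //= /leading_factor ltnNge leq_ord.
  by rewrite -(inj_eq val_inj) /= gtn_eqF // sum_expr_eq0 ?mul0r.
case: ifP => [/forallP m0|/negbT/forallPn [j]]; last first.
  rewrite negb_imply => /andP[j_neq_max mj_neq0].
  rewrite (bigD1 j) //= /leading_factor ifT ?expr0n ?(negbTE mj_neq0) ?mul0r //.
  by rewrite ltn_ord_max.
apply: big1 => j _; rewrite /leading_factor; case: (eqVneq j ord_max) => [->|j_neq].
  by rewrite ltnn ?eqxx.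
rewrite ifT ?ltn_ord_max //.
by move/implyP: (m0 j) => /(_ j_neq)/eqP ->.
Qed.

Lemma proj_sum_lead m : (0 < m ord0)%N ->
  proj_sum m = \prod_(j | j != ord0) \sum_(x : F) x ^+ m j.
Proof.
move=> m0_gt0; rewrite proj_sumE big_ord_recl [X in _ + X]big1 ?addr0 => [|i _].
  rewrite (bigD1 ord0) //= /leading_factor ltnn eqxx mul1r.
  by apply: eq_bigr => j j_neq0; rewrite (negbTE j_neq0).
by rewrite [LHS](bigD1 ord0) //= /leading_factor /= expr0n eqn0Ngt m0_gt0 mul0r.
Qed.

End ProjectiveSums.

Section Evaluation.
Variables (F : finFieldType) (n : nat).
Local Notation N := (Npts F n).
Local Notation ev := (@ev F n).
Implicit Types (u w : 'rV[F]_N) (p : {mpoly F[n.+1]}) (a b m : 'X_{1..n.+1}).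

Lemma dotv_evX a b : dotv (ev 'X_[a]) (ev 'X_[b]) = proj_sum F (a + b)%MM.
Proof.
rewrite /dotv /proj_sum (big_enum_val (fun v : 'rV[F]_n.+1 => _)).
apply: eq_bigr => i _; rewrite !mxE !mevalX -big_split /=.
by apply: eq_bigr => j _; rewrite mnmDE exprD.
Qed.

Lemma dotv0l w : dotv 0 w = 0.
Proof. by rewrite /dotv big1 // => i _; rewrite mxE mul0r. Qed.

Lemma dotvDl u u' w : dotv (u + u') w = dotv u w + dotv u' w.
Proof. by rewrite /dotv -big_split; apply: eq_bigr => i _; rewrite mxE mulrDl. Qed.

Lemma dotvZl c u w : dotv (c *: u) w = c * dotv u w.
Proof. by rewrite /dotv mulr_sumr; apply: eq_bigr => i _; rewrite mxE mulrA. Qed.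

Lemma dotv_suml (I : Type) (r : seq I) (P : pred I) (f : I -> 'rV[F]_N) w :
  dotv (\sum_(i <- r | P i) f i) w = \sum_(i <- r | P i) dotv (f i) w.
Proof. by elim/big_rec2: _ => [|i x y _ <-]; rewrite ?dotv0l ?dotvDl. Qed.

Lemma ev_mpolyE p : ev p = \sum_(m <- msupp p) p@_m *: ev 'X_[m].
Proof.
have evD p' q : ev (p' + q) = ev p' + ev q.
  by apply/rowP => i; rewrite !mxE mevalD.
have ev0 : ev 0 = 0 by apply/rowP => i; rewrite !mxE meval0.
rewrite {1}(mpolyE p) (big_morph ev evD ev0); apply: eq_bigr => m _.
by apply/rowP => i; rewrite !mxE mevalZ.
Qed.

Lemma dotv_ev p w : dotv (ev p) w = \sum_(m <- msupp p) p@_m * dotv (ev 'X_[m]) w.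
Proof. by rewrite ev_mpolyE dotv_suml; apply: eq_bigr => m _; rewrite dotvZl. Qed.

Lemma mnm_le_mdeg m j : (m j <= mdeg m)%N.
Proof. by rewrite mdegE (bigD1 j) //= leq_addr. Qed.

Lemma mdeg_xn_pow k : mdeg (xn_pow n k) = k.
Proof.
rewrite mdegE (bigD1 ord_max) //= mnmE eqxx big1 ?addn0 // => j j_neq.
by rewrite mnmE (negbTE j_neq).
Qed.

Lemma xn_powE m :
  (m == xn_pow n (mdeg m)) = [forall j, (j != ord_max) ==> (m j == 0%N)].
Proof.
apply/eqP/forallP => [m_xn j|m0].
  by apply/implyP => j_neq; rewrite m_xn mnmE (negbTE j_neq).
apply/mnmP => j; rewrite mnmE; case: eqP => [->|/eqP j_neq]; last first.
  exact/eqP/(implyP (m0 j)).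
rewrite mdegE (bigD1 ord_max) //= big1 ?addn0 // => i i_neq.
exact/eqP/(implyP (m0 i)).
Qed.

Lemma dotv_evX_small a b : (mdeg a + mdeg b < #|F|.-1)%N ->
  dotv (ev 'X_[a]) (ev 'X_[b]) =
  if (a == xn_pow n (mdeg a)) && (b == xn_pow n (mdeg b)) then 1 else 0.
Proof.
move=> small_ab; rewrite dotv_evX proj_sum_small => [|j]; last first.
  by rewrite mnmDE (leq_ltn_trans _ small_ab) // leq_add ?mnm_le_mdeg.
rewrite !xn_powE; congr (if _ then _ else _); apply/forallP/andP.
  by move=> ab0; split; apply/forallP => j; apply/implyP => /(implyP (ab0 j));
    rewrite mnmDE addn_eq0 => /andP[].
move=> [/forallP a0 /forallP b0] j; apply/implyP => j_neq.
by rewrite mnmDE addn_eq0 (implyP (a0 j) j_neq) (implyP (b0 j) j_neq).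
Qed.

Lemma mdeg_eq_mnm a b :
  mdeg a = mdeg b -> (forall j, j != ord0 -> a j = b j) -> a = b.
Proof.
move=> deg_ab ab; apply/mnmP => j; case: (eqVneq j ord0) => [->|/ab //].
move/eqP: deg_ab; rewrite !mdegE (bigD1 ord0) //= [X in _ == X](bigD1 ord0) //=.
by rewrite (eq_bigr b) ?eqn_add2r => [/eqP|i /ab].
Qed.

(* [x_0 * \prod_(j > 0) x_j ^+ (q - 1 - b j)]: against [x^a] only the points
   with leading one at [0] count, giving the product of the power sums
   [\sum_x x ^+ (q - 1 + a j - b j)], which are all [-1] if [a = b] while one
   of them vanishes otherwise. *)
Definition dual_mnm b : 'X_{1..n.+1} :=
  [multinom if i == ord0 then 1%N else (#|F|.-1 - b i)%N | i < n.+1].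

Lemma dotv_evX_dual a b : mdeg a = mdeg b -> (mdeg a < #|F|.-1)%N ->
  dotv (ev 'X_[a]) (ev 'X_[dual_mnm b]) = if a == b then (-1) ^+ n else 0.
Proof.
move=> deg_ab small_a; rewrite dotv_evX proj_sum_lead ?mnmDE ?mnmE ?addn1 //.
have lt_a j : (a j < #|F|.-1)%N := leq_ltn_trans (mnm_le_mdeg a j) small_a.
have lt_b j : (b j < #|F|.-1)%N by rewrite (leq_ltn_trans (mnm_le_mdeg b j)) -?deg_ab.
case: eqP => [<-|/eqP neq_ab].
  rewrite (eq_bigr (fun _ => -1)) => [|j j_neq0]; last first.
    by rewrite mnmDE mnmE (negbTE j_neq0) subnKC ?sum_expr_card_pred // ltnW.
  by rewrite prodr_const cardC1 card_ord.
have [j j_neq0 abj] : exists2 j, j != ord0 & a j != b j.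
  apply/exists_inP; apply: contraR neq_ab => /exists_inPn a_eq_b.
  by apply/eqP/mdeg_eq_mnm => // j /a_eq_b/negbNE/eqP.
rewrite (bigD1 j) //= mnmDE mnmE (negbTE j_neq0).
case: (ltngtP (a j) (b j)) abj => [lt_ab|lt_ba|->]; rewrite ?eqxx // => _.
  by rewrite sum_expr_eq0 ?mul0r //; have := lt_b j; lia.
have -> : (a j + (#|F|.-1 - b j) = #|F|.-1 + (a j - b j))%N by have := lt_b j; lia.
under eq_bigr do rewrite expr_card_predD ?subn_gt0 //.
by rewrite sum_expr_eq0 ?mul0r //; have := lt_a j; lia.
Qed.

Lemma free_dotv_dual (T : eqType) (g h : T -> 'rV[F]_N) (s : seq T) :
  uniq s -> {in s &, forall x y, (dotv (g x) (h y) == 0) = (x != y)} ->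
  free (map g s).
Proof.
move=> uniq_s gh_dual.
suff: free (in_tuple (map g s)) by []; apply/freeP => kk kk_g i.
have lt_size (j : 'I_(size (map g s))) : (j < size s)%N by rewrite -(size_map g).
have x0 : T by move: (leq_ltn_trans (leq0n _) (lt_size i)); case: (s).
have := congr1 (fun u => dotv u (h (nth x0 s i))) kk_g.
rewrite dotv_suml dotv0l (bigD1 i) //= big1 ?addr0 => [|j neq_ji]; last first.
  rewrite dotvZl (nth_map x0) // (_ : dotv _ _ = 0) ?mulr0 //; apply/eqP.
  by rewrite gh_dual ?mem_nth // nth_uniq // (inj_eq val_inj).
rewrite dotvZl (nth_map x0) // => /eqP; rewrite mulf_eq0 gh_dual ?mem_nth //.
by rewrite eqxx orbF => /eqP.
Qed.

Lemma free_evX k (s : seq 'X_{1..n.+1}) :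
  (k < #|F|.-1)%N -> uniq s -> {in s, forall m, mdeg m = k} ->
  free [seq ev 'X_[m] | m <- s].
Proof.
move=> small_k uniq_s deg_s.
apply: (free_dotv_dual (h := fun m => ev 'X_[dual_mnm m])) => // a b sa sb.
rewrite dotv_evX_dual ?deg_s //.
by case: (eqVneq a b) => _; rewrite ?eqxx // expf_eq0 oppr_eq0 oner_eq0 andbF.
Qed.

End Evaluation.

Lemma basis_of_cap_hyperplane (K : fieldType) (vT : vectType K)
    (C D : {vspace vT}) (x : vT) (s : seq vT) :
  free s -> {subset s <= C :&: D}%VS -> x \in C -> x \notin D ->
  \dim C = (size s).+1 -> basis_of (C :&: D)%VS s.
Proof.
move=> free_s s_CD xC xD dimC; rewrite basisEfree free_s.
have span_s : (<<s>> <= C :&: D)%VS by apply/span_subvP.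
rewrite span_s -ltnS -dimC ltn_neqAle dimvS ?capvSl // andbT.
apply: contra xD => /eqP dim_eq; have CD_C : (C :&: D)%VS = C.
  by apply/eqP; rewrite eqEdim capvSl dim_eq /=.
by move: xC; rewrite -CD_C memv_cap => /andP[].
Qed.

Definition mnms_deg (n d : nat) : seq 'X_{1..n} :=
  [seq s2m t | t : d.-tuple 'I_n <- enum (basis n d)].

Lemma mem_Mmon (n k : nat) (m : 'X_{1..n.+1}) :
  (m \in Mmon n k) = (mdeg m == k) && (m != xn_pow n k).
Proof.
apply/mapP/andP => [[m' + ->]|[deg_m m_neq]]; first by rewrite mem_enum => /andP[].
have lt_deg : (mdeg m < k.+1)%N by rewrite (eqP deg_m).
by exists (BMultinom lt_deg); rewrite // mem_enum inE /= deg_m.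
Qed.

Lemma uniq_Mmon (n k : nat) : uniq (Mmon n k).
Proof. by rewrite map_inj_uniq ?enum_uniq //; exact: val_inj. Qed.

Lemma size_Mmon (n k : nat) : size (Mmon n k) = ('C(n + k, k)).-1.
Proof.
have xn_deg : xn_pow n k \in mnms_deg n.+1 k by rewrite -basis_cover mdeg_xn_pow.
have perm_M : perm_eq (Mmon n k) (filter (predC1 (xn_pow n k)) (mnms_deg n.+1 k)).
  apply: uniq_perm; rewrite ?uniq_Mmon ?filter_uniq ?uniq_basis // => m.
  by rewrite mem_filter mem_Mmon -basis_cover andbC.
rewrite (perm_size perm_M) size_filter addnC -(size_basis n k).
rewrite -(count_predC (pred1 (xn_pow n k))).
by rewrite (count_uniq_mem _ (uniq_basis _ _)) xn_deg.
Qed.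

Section Code.
Variables (F : finFieldType) (n k : nat) (C D : {vspace 'rV[F]_(Npts F n)}).
Hypothesis lt_k_card : (k < #|F|.-1)%N.
Hypothesis lt_2k_card : (k + k < #|F|.-1)%N.
Hypothesis code_C :
  forall c, c \in C <-> exists p : {mpoly F[n.+1]}, p \is k.-homog /\ c = ev p.
Hypothesis dual_D : forall x, x \in D <-> forall c, c \in C -> dotv c x = 0.
Local Notation evX m := (@ev F n 'X_[m]).

Lemma evX_in_code m : mdeg m = k -> evX m \in C.
Proof.
by move=> deg_m; apply/code_C; exists 'X_[m]; rewrite dhomogX; split => //; apply/eqP.
Qed.

Lemma dim_code : \dim C = 'C(n + k, k).
Proof.
have free_code : free [seq evX m | m <- mnms_deg n.+1 k].
  apply: free_evX lt_k_card (uniq_basis _ _) _ => m.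
  by rewrite -basis_cover => /eqP.
have -> : C = <<[seq evX m | m <- mnms_deg n.+1 k]>>%VS.
  apply/eqP; rewrite eqEsubv; apply/andP; split.
    apply/subvP => c /code_C[p [hom_p ->]]; rewrite ev_mpolyE big_seq.
    apply: memv_suml => m supp_m; apply/memvZ/memv_span/map_f.
    by rewrite -basis_cover (dhomogP _ _ _ hom_p).
  apply/span_subvP => c /mapP[m deg_m ->]; apply: evX_in_code.
  by apply/eqP; rewrite basis_cover.
by rewrite (eqP free_code) size_map size_basis addnC.
Qed.

Lemma evX_Mmon_in_hull m : m \in Mmon n k -> evX m \in (C :&: D)%VS.
Proof.
rewrite mem_Mmon memv_cap => /andP[/eqP deg_m m_neq].
rewrite evX_in_code //=; apply/dual_D => c /code_C[p [hom_p ->]].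
rewrite dotv_ev big_seq big1 // => m' supp_m'.
rewrite dotv_evX_small (dhomogP _ _ _ hom_p) ?deg_m // (negbTE m_neq).
by rewrite andbF mulr0.
Qed.

Lemma evX_xn_pow_notin_dual : evX (xn_pow n k) \notin D.
Proof.
apply/negP => /dual_D /(_ _ (evX_in_code (mdeg_xn_pow n k))).
by rewrite dotv_evX_small mdeg_xn_pow ?eqxx //; apply/eqP/oner_neq0.
Qed.

End Code.

Theorem mainTheorem8 (F : finFieldType) (n k : nat)
  (C D : {vspace 'rV[F]_(Npts F n)}) :
  (1 <= n)%N -> (1 <= k)%N -> (2 * k + 1 < #|F|)%N ->
  (forall c, c \in C <-> exists p : {mpoly F[n.+1]}, p \is k.-homog /\ c = ev p) ->
  (forall x, x \in D <-> forall c, c \in C -> dotv c x = 0) ->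
  [/\ \dim (C :&: D) = (\dim C).-1,
      (\dim C).-1 = ('C(n + k, k)).-1
    & basis_of (C :&: D)%VS [seq ev 'X_[m] | m <- Mmon n k]].
Proof.
move=> _ _ q_gt code_C dual_D.
have lt_2k_card : (k + k < #|F|.-1)%N by lia.
have lt_k_card : (k < #|F|.-1)%N by lia.
have dimC := dim_code lt_k_card code_C.
have basis_M : basis_of (C :&: D)%VS [seq ev 'X_[m] | m <- Mmon n k].
  apply: (basis_of_cap_hyperplane _ _ (evX_in_code code_C (mdeg_xn_pow n k))
           (evX_xn_pow_notin_dual lt_2k_card code_C dual_D)).
  - apply: free_evX lt_k_card (uniq_Mmon n k) _ => m.
    by rewrite mem_Mmon => /andP[/eqP].
  - by move=> _ /mapP[m /(evX_Mmon_in_hull lt_2k_card code_C dual_D) ? ->].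
  - by rewrite size_map size_Mmon dimC prednK // bin_gt0 leq_addl.
split => //; last by rewrite dimC.
by rewrite -(span_basis basis_M) (eqP (basis_free basis_M)) size_map size_Mmon dimC.
Qed.
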